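(* Let $T$ be a local, translation-invariant stochastic matrix on $\mathbb{Z}\times\{1,\dots,D\}$ with $\det X(k)\ne0$ for all $k\in[-\pi,\pi]$. Suppose there is a real orthogonal $D\times D$ matrix $M$ such that $$\sum_{b,c}M_{a,b}\,T_{j-l,b;j,c}\,M_{d,c}=T_{j+l,a;j,d}\quad\text{for all } l\in\mathbb{Z},\ j,\ a,\ d$$ (spatial inversion symmetry; equivalently $MX(-k)M^{\top}=X(k)$). Then $w(T,0)=0$.
   Context: States are pairs $(j,a)$, $j\in\mathbb{Z}$, $a\in\{1,\dots,D\}$. A stochastic matrix is a real matrix $T=(T_{i,a;j,b})$ with $T_{i,a;j,b}\ge0$ and $\sum_{i,a}T_{i,a;j,b}=1$ for all $(j,b)$. It is local if there are $C,\ell>0$ with $T_{i,a;j,b}\le Ce^{-|i-j|/\ell}$ for all sufficiently large $|i-j|$, and translation invariant if $T_{i+1,a;j+1,b}=T_{i,a;j,b}$. The Bloch matrix is $X(k)$ with $X_{a,b}(k)=\sum_{l\in\mathbb{Z}}T_{j+l,a;j,b}e^{-ikl}$, $k\in[-\pi,\pi]$, and $w(T,0)=\int_{-\pi}^{\pi}\frac{dk}{2\pi i}\partial_k\log\det X(k)\in\mathbb{Z}$. *)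

From mathcomp Require Import all_boot all_order all_algebra.
From mathcomp Require Import complex.
From mathcomp Require Import all_classical all_reals all_analysis.
Set Implicit Arguments. Unset Strict Implicit. Unset Printing Implicit Defensive.
Import Order.TTheory GRing.Theory Num.Theory numFieldNormedType.Exports.
Local Open Scope ring_scope.
Local Open Scope classical_set_scope.

Section Defs.
Variable R : realType.

(* A (possibly non-translation-invariant) real matrix indexed by
   Z x {1..D} : T i a j b stands for T_{i,a;j,b}.  'I_D encodes {1,..,D}. *)
Definition zmat (D : nat) := int -> 'I_D -> int -> 'I_D -> R.

Definition zpartial (f : int -> R) (N : nat) : R :=
  \sum_(i < N.+1) f (i%:Z) + \sum_(i < N) f (- (i.+1)%:Z).

Definition zsum (f : int -> R) : R := limn (zpartial f).

Definition stochastic D (T : zmat D) : Prop :=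
  (forall i a j b, 0 <= T i a j b) /\
  (forall j b, zpartial (fun i => \sum_(a < D) T i a j b) @ \oo --> (1 : R)).

Definition local D (T : zmat D) : Prop :=
  exists C : R, exists l : R, 0 < C /\ 0 < l /\
  exists N : nat, forall i a j b, (N <= absz (i - j))%N ->
    T i a j b <= C * expR (- ((absz (i - j))%:R) / l).

Definition transl_inv D (T : zmat D) : Prop :=
  forall i a j b, T (i + 1) a (j + 1) b = T i a j b.

(* Bloch matrix X_{a,b}(k) = sum_l T_{j+l,a;j,b} e^{-ikl}  (with j = 0),
   e^{-ikl} = cos(kl) - i sin(kl). *)
Definition bloch D (T : zmat D) (k : R) : 'M[R[i]]_D :=
  \matrix_(a, b)
    (zsum (fun l => T l a 0 b * cos (k * l%:~R))
     +i* (- zsum (fun l => T l a 0 b * sin (k * l%:~R))))%C.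

Definition detX D (T : zmat D) (k : R) : R[i] := \det (bloch T k).

(* w(T,0) = int_{-pi}^{pi} dk/(2 pi i) d_k log det X(k)
          = (1/(2 pi i)) int_{-pi}^{pi} f'(k)/f(k) dk,  f = det X = u + i v.
   f'/f = (u u' + v v')/|f|^2 + i (u v' - v u')/|f|^2, hence
   w = (1/2pi) int (u v' - v u')/|f|^2  +  i * ( -(1/2pi) int (u u' + v v')/|f|^2 ). *)
Definition winding0 D (T : zmat D) : R[i] :=
  let u := fun k => complex.Re (detX T k) in
  let v := fun k => complex.Im (detX T k) in
  let n2 := fun k => u k ^+ 2 + v k ^+ 2 in
  let I1 := Rintegral (@lebesgue_measure R) `[(- pi)%R, pi]%classic
              (fun k => (u k * (derive1 v k) - v k * (derive1 u k)) / n2 k) in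
  let I2 := Rintegral (@lebesgue_measure R) `[(- pi)%R, pi]%classic
              (fun k => (u k * (derive1 u k) + v k * (derive1 v k)) / n2 k) in
  ((I1 / (2 * pi)) +i* (- (I2 / (2 * pi))))%C.

End Defs.

From HB Require Import structures.
From mathcomp Require Import all_boot all_order all_algebra.
From mathcomp Require Import complex.
From mathcomp Require Import all_classical all_reals all_analysis.
From mathcomp Require Import ring.
Import Order.TTheory GRing.Theory Num.Theory numFieldNormedType.Exports.
Local Open Scope ring_scope.

(* Inversion symmetry reads M X(-k) M^T = X(k) for the Bloch matrix, and M is
   orthogonal, so det X(k) is an even function of k.  Hence Re det X and
   Im det X are even, their derivatives are odd, and both integrands in the
   definition of w(T,0) are odd functions of k: their integrals over the
   symmetric interval [-pi, pi] vanish. *)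

Section measure_preserving_involution.
Local Open Scope classical_set_scope.
Local Open Scope ereal_scope.
Context d (T : measurableType d) (R : realType) (mu : {measure set T -> \bar R}).
Variable phi : T -> T.
Hypotheses (mphi : measurable_fun setT phi) (phiK : involutive phi)
  (mu_phi : forall A, measurable A -> mu (phi @^-1` A) = mu A).

Import HBNNSimple.

Section comp_nnsfun.
Variable h : {nnsfun T >-> R}.
Let h_phi : T -> R := h \o phi.

Let h_phi_measurable : measurable_fun setT h_phi.
Proof. exact: measurableT_comp. Qed.
HB.instance Definition _ := isMeasurableFun.Build _ _ _ _ h_phi h_phi_measurable.

Let h_phi_finite : finite_set (range h_phi).
Proof. by apply: sub_finite_set (fimfunP h) => _ [x _ <-]; exists (phi x). Qed.
HB.instance Definition _ := FiniteImage.Build _ _ h_phi h_phi_finite.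

Let h_phi_ge0 x : (0 <= h_phi x)%R.
Proof. exact: fun_ge0. Qed.
HB.instance Definition _ := isNonNegFun.Build _ _ h_phi h_phi_ge0.

Definition comp_nnsfun : {nnsfun T >-> R} := h_phi.

Lemma sintegral_comp_nnsfun : sintegral mu comp_nnsfun = sintegral mu h.
Proof.
rewrite !sintegralET; apply: eq_fsbigr => x _; congr (_ * _).
by rewrite -(mu_phi _ (measurable_funPTI h (measurable_set1 x))).
Qed.
End comp_nnsfun.

(* No measurability of [G] is needed: both sides are compared through the
   definition of the integral as a supremum over simple functions. *)
Lemma ge0_integral_comp_involution (G : T -> \bar R) :
  (forall x, 0 <= G x) -> \int[mu]_x G (phi x) = \int[mu]_x G x.
Proof.
suff le_int (F : T -> \bar R) : (forall x, 0 <= F x) ->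
    \int[mu]_x F (phi x) <= \int[mu]_x F x.
  move=> G0; apply/eqP; rewrite eq_le le_int //=.
  have := le_int (G \o phi) (fun x => G0 _).
  by under eq_integral do rewrite /= phiK.
move=> F0; rewrite !ge0_integralTE //.
apply: ge_ereal_sup => _ [h /= hle <-]; apply: ereal_sup_ubound.
exists (comp_nnsfun h); last exact: sintegral_comp_nnsfun.
by move=> x /=; have := hle (phi x); rewrite phiK.
Qed.

Lemma Rintegral_odd_involution (A : set T) (f : T -> R) :
  phi @^-1` A = A -> (forall x, f (phi x) = - f x)%R -> Rintegral mu A f = 0%R.
Proof.
move=> phiA fodd; rewrite /Rintegral integralE.
set F := fun x => (f x)%:E.
have phiA_mem x : (phi x \in A) = (x \in A).
  by rewrite -[in RHS]phiA; apply/idP/idP => /set_mem; exact: mem_set.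
have -> : \int[mu]_(x in A) F^\- x = \int[mu]_(x in A) F^\+ x.
  rewrite 2!(integral_mkcond A) -(@ge0_integral_comp_involution (F^\+ \_ A)); last first.
    by move=> x; rewrite /patch; case: ifP => // _; exact: funepos_ge0.
  apply: eq_integral => x _; rewrite /patch phiA_mem; case: ifP => // _.
  by rewrite funeposE funenegE /F /= fodd EFinN.
have : 0 <= \int[mu]_(x in A) F^\+ x by apply: integral_ge0 => x _; exact: funepos_ge0.
by case: (\int[mu]_(x in A) F^\+ x) => [r| |] //= _; rewrite subrr.
Qed.

End measure_preserving_involution.

Section lebesgue_reflection.
Local Open Scope classical_set_scope.
Context {R : realType}.
Notation mu := (@lebesgue_measure R).

Lemma Rintegral_odd (a : R) (f : R -> R) : (forall x, f (- x) = - f x) ->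
  Rintegral mu `[(- a)%R, a] f = 0.
Proof.
apply: (@Rintegral_odd_involution _ _ _ mu -%R) => //.
- exact: opprK.
- exact: lebesgue_measureN.
- by rewrite opp_preimage_itvbndbnd opprK.
Qed.
End lebesgue_reflection.

Section even_derivative.
Local Open Scope classical_set_scope.
Context {R : realType}.

Lemma dnbhs0N : -%R @ (0 : R)^' = (0 : R)^'.
Proof.
apply/seteqP; split => A [e /= e0 eA]; exists e => //= y /=;
  rewrite sub0r normrN => ye y0.
  by rewrite -[y]opprK; apply: eA; rewrite /= ?sub0r ?opprK ?oppr_eq0.
by apply: eA; rewrite /= ?sub0r ?normrN ?oppr_eq0.
Qed.

(* Also when [f @ F] diverges: [lim] then returns 0 on both sides. *)
Lemma lim_oppr (T : Type) (F : set_system T) (FF : ProperFilter F) (f : T -> R) :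
  lim (- f @ F) = - lim (f @ F).
Proof.
have [cf|df] := pselect (cvg (f @ F)); first exact: limN.
have dNf : ~ cvg (- f @ F) by move=> /is_cvgN; rewrite opprK.
by rewrite (dvgP df) (dvgP dNf) oppr0.
Qed.

Lemma derive1_even (u : R -> R) : (forall x, u (- x) = u x) ->
  forall x, derive1 u (- x) = - derive1 u x.
Proof.
move=> ue x; rewrite /derive1.
set q := fun h : R => h^-1 *: (u (h + x) - u x).
have -> : (fun h : R => h^-1 *: (u (h + - x) - u (- x))) = - (q \o -%R).
  apply/funext => h; rewrite !fctE /q -[h - x]opprK opprB ue ue invrN scaleNr opprK.
  by rewrite [- h + x]addrC.
by rewrite lim_oppr; congr (- lim _); exact: (congr1 (fmap q) dnbhs0N).
Qed.
End even_derivative.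

Section zseries.
Context {R : realType}.
Implicit Types (f g : int -> R) (N : nat).

Lemma zpartialS f N :
  zpartial f N.+1 = zpartial f N + (f N.+1%:Z + f (- N.+1%:Z)).
Proof.
by rewrite /zpartial big_ord_recr [\sum_(i < N.+1) f (- _)]big_ord_recr /=; ring.
Qed.

Lemma zpartialN f N : zpartial (fun l => f (- l)) N = zpartial f N.
Proof.
elim: N => [|N IH]; first by rewrite /zpartial !big_ord1 !big_ord0 oppr0.
by rewrite !zpartialS IH opprK [f (- _) + _]addrC.
Qed.

Lemma zsumN f : zsum (fun l => f (- l)) = zsum f.
Proof. by rewrite /zsum (funext (zpartialN f)). Qed.

Definition zfold f (n : nat) : R :=
  if n is n'.+1 then f n'.+1%:Z + f (- n'.+1%:Z) else f 0.

Lemma zpartial_series f N : zpartial f N = series (zfold f) N.+1.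
Proof.
elim: N => [|N IH]; first by rewrite /zpartial /series /= big_nat1 big_ord1 big_ord0 addr0.
by rewrite zpartialS IH /series /= [in RHS]big_nat_recr.
Qed.

Lemma cvg_zpartial_series f : cvgn (zpartial f) <-> cvgn (series (zfold f)).
Proof.
rewrite (funext (zpartial_series f)).
by split => /cvg_ex[l fl]; apply/cvg_ex; exists l; rewrite ?cvg_shiftS // -cvg_shiftS.
Qed.

Lemma cvg_zpartial_le f g : (forall l, `|f l| <= g l) ->
  cvgn (zpartial g) -> cvgn (zpartial f).
Proof.
move=> fg; rewrite !cvg_zpartial_series => cvg_g.
have g0 l : 0 <= g l by exact: le_trans (normr_ge0 _) (fg l).
apply/normed_cvg/(series_le_cvg _ _ _ cvg_g) => [n|[|n]|[|n]] //=.
- by rewrite addr_ge0.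
- exact: (le_trans (ler_normD _ _) (lerD (fg _) (fg _))).
Qed.

Lemma zsum_lin (I : Type) (r : seq I) (K : I -> R) (F : I -> int -> R) :
  (forall i, cvgn (zpartial (F i))) ->
  zsum (fun l => \sum_(i <- r) K i * F i l) = \sum_(i <- r) K i * zsum (F i).
Proof.
move=> cvgF; rewrite /zsum.
have -> : zpartial (fun l => \sum_(i <- r) K i * F i l) =
          (fun N => \sum_(i <- r) K i * zpartial (F i) N).
  apply/funext => N; rewrite /zpartial [\sum_(i < N.+1) _]exchange_big.
  rewrite [\sum_(i < N) _]exchange_big -big_split /=.
  by apply: eq_bigr => i _; rewrite mulrDr !mulr_sumr.
apply: cvg_lim => //; apply: cvg_big => [|i _]; first exact: add_continuous.
by apply: cvgM; [exact: cvg_cst | exact: cvgF].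
Qed.
End zseries.

Section bloch_inversion.
Context {R : realType} {D : nat} {T : zmat R D} {M : 'M[R]_D}.
Hypothesis T_stochastic : stochastic T.
Hypothesis T_inversion : forall (l j : int) (a d : 'I_D),
  \sum_(b < D) \sum_(c < D) M a b * T (j - l) b j c * M d c = T (j + l) a j d.

Definition zfourier (psi : R -> R) (k : R) : 'M[R]_D :=
  \matrix_(a, b) zsum (fun l => T l a 0 b * psi (k * l%:~R)).

Lemma bloch_zfourier k : bloch T k =
  map_mx (real_complex R) (zfourier cos k) - 'i%C *: map_mx (real_complex R) (zfourier sin k).
Proof.
apply/matrixP => a b; rewrite !mxE [LHS]complexE /=.
by rewrite raddfN mulrN.
Qed.

Lemma zfourier_inversion (psi : R -> R) k : (forall x, `|psi x| <= 1) ->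
  zfourier psi k = M *m zfourier psi (- k) *m M^T.
Proof.
move=> psi1; have [T0 Tcol] := T_stochastic.
have cvgT (p : 'I_D * 'I_D) :
    cvgn (zpartial (fun l => T l p.1 0 p.2 * psi (- k * l%:~R))).
  apply: (@cvg_zpartial_le _ _ (fun l => \sum_(a < D) T l a 0 p.2)); last first.
    by apply/cvg_ex; exists 1; exact: Tcol.
  move=> l; rewrite normrM ger0_norm // (bigD1 p.1) //=.
  apply: le_trans (ler_piMr (T0 _ _ _ _) (psi1 _)) _.
  by rewrite lerDl; apply: sumr_ge0 => i _; exact: T0.
apply/matrixP => a d; rewrite !mxE -zsumN.
transitivity (zsum (fun l => \sum_(p : 'I_D * 'I_D)
    (M a p.1 * M d p.2) * (T l p.1 0 p.2 * psi (- k * l%:~R)))).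
  congr zsum; apply/funext => l.
  have := T_inversion (- l) 0 a d; rewrite sub0r add0r opprK => <-.
  rewrite mulr_suml; under eq_bigr do rewrite mulr_suml.
  by rewrite pair_bigA; apply: eq_bigr => p _; rewrite rmorphN mulrN mulNr; ring.
rewrite zsum_lin //.
under [RHS]eq_bigr do rewrite !mxE mulr_suml.
rewrite exchange_big pair_bigA; apply: eq_bigr => p _; rewrite mxE; ring.
Qed.

Lemma bloch_inversion k : let Mc := map_mx (real_complex R) M in
  bloch T k = Mc *m bloch T (- k) *m Mc^T.
Proof.
rewrite /= !bloch_zfourier (@zfourier_inversion cos k (@cos_max R)).
rewrite (@zfourier_inversion sin k (@sin_max R)) !map_mxM map_trmx.
by rewrite mulmxBr mulmxBl -scalemxAr -scalemxAl.
Qed.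

Hypothesis M_orthogonal : M *m M^T = 1%:M.

Lemma detXN k : detX T (- k) = detX T k.
Proof.
rewrite /detX [in RHS]bloch_inversion /= !det_mulmx det_tr det_map_mx.
have detM2 : \det M * \det M = 1 by rewrite -{2}det_tr -det_mulmx M_orthogonal det1.
by rewrite mulrAC -rmorphM detM2 rmorph1 mul1r.
Qed.
End bloch_inversion.

Theorem mainTheorem7 (R : realType) (D : nat) (T : zmat R D) (M : 'M[R]_D) :
  stochastic T -> local T -> transl_inv T ->
  (forall k : R, - pi <= k <= pi -> detX T k != 0) ->
  M *m M^T = 1%:M ->
  (forall (l j : int) (a d : 'I_D),
      \sum_(b < D) \sum_(c < D) M a b * T (j - l) b j c * M d c = T (j + l) a j d) ->
  winding0 T = 0.
Proof.
(* Locality, translation invariance and det X <> 0 make w(T,0) an integer;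
   its vanishing needs none of them. *)
move=> Tst _ _ _ MMT TM; rewrite /winding0 /=.
set u := fun k => complex.Re (detX T k).
set v := fun k => complex.Im (detX T k).
have ue x : u (- x) = u x by rewrite /u (detXN Tst TM MMT).
have ve x : v (- x) = v x by rewrite /v (detXN Tst TM MMT).
by rewrite !Rintegral_odd ?mul0r ?oppr0 // => x;
  rewrite -/(u _) -/(v _) ue ve !derive1_even //; ring.
Qed.
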